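(* Let $p$ be an odd prime and let $\zeta\in\mathbb{Z}_p$ be such that $-\zeta$ is not a square modulo $p$. Let $\alpha,\beta,\gamma\in\mathbb{Z}_p$ and let $k\ge0$ be an integer such that: - $p^k\mid\alpha$ and $p^k\mid(\beta-\gamma)$; - $p^{k+1}\nmid\alpha$ or $p^{k+1}\nmid(\beta-\gamma)$. Let $$f(x)=(x^2+p\alpha x+p\beta+\zeta)(x^2-p\alpha x+p\gamma+\zeta).$$ Then every monic degree-$4$ polynomial $g\in\mathbb{Z}_p[x]$ with $g\equiv f\pmod{p^{2k+3}}$ (coefficientwise) is reducible in $\mathbb{Z}_p[x]$.
   Context: Reducible means it can be written as a product of two nonconstant polynomials in $\mathbb{Z}_p[x]$. *)

(* The ring Z_p of p-adic integers is not in the libraries;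
   we construct it here honestly as the inverse limit of Z/p^nZ:
   compatible sequences (x_n)_n of integers with 0 <= x_n < p^n and
   x_n = x_{n+1} mod p^n, with componentwise ring operations mod p^n. *)
From HB Require Import structures.
From mathcomp Require Import all_boot all_order all_algebra.
From mathcomp Require Import boolp.
From Stdlib Require Import FunctionalExtensionality ProofIrrelevance.
Set Implicit Arguments. Unset Strict Implicit. Unset Printing Implicit Defensive.
Import Order.TTheory GRing.Theory Num.Theory.
Local Open Scope ring_scope.

(* The base is maxn p 2 (as for 'Z_p in zmodp), so that the type is a genuine
   nonzero ring for every p; for a prime p this is just p. *)
Definition padic_base (p : nat) : nat := maxn p 2.
Definition padic_mod (p n : nat) : int := ((padic_base p) ^ n)%:Z.

Definition padic_pred (p : nat) (x : nat -> int) : Prop :=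
  forall n, x n = (x n.+1 %% padic_mod p n)%Z.

Record padic (p : nat) := Padic { pval : nat -> int; pvalP : padic_pred p pval }.

HB.instance Definition _ p := gen_eqMixin (padic p).
HB.instance Definition _ p := gen_choiceMixin (padic p).

Section PadicRing.
Variable p : nat.
Local Notation m := (padic_mod p).

Lemma padic_mod_gt0 n : 0 < m n.
Proof.
rewrite /padic_mod ltz_nat expn_gt0 /padic_base.
by apply/orP; left; rewrite leq_max orbT.
Qed.

Lemma padic_modS n : m n.+1 = (padic_base p)%:Z * m n.
Proof. by rewrite /padic_mod expnS PoszM. Qed.

Lemma modz_modS (a : int) n : modz (modz a (m n.+1)) (m n) = modz a (m n).
Proof.
rewrite {2}(divz_eq a (m n.+1)) padic_modS mulrA modzMDl.
by [].
Qed.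

Lemma padic_red (x : padic p) n : modz (pval x n) (m n) = pval x n.
Proof. by rewrite (pvalP x n) modz_mod. Qed.

Lemma padic_eq (x y : padic p) : (forall n, pval x n = pval y n) -> x = y.
Proof.
case: x y => [x Hx] [y Hy] /= E.
have Exy : x = y by apply: functional_extensionality.
subst y; by rewrite (proof_irrelevance _ Hx Hy).
Qed.

Definition padic_of (f : nat -> int) (H : padic_pred p f) := Padic H.

Lemma zero_proof : padic_pred p (fun _ => 0).
Proof. by move=> n; rewrite mod0z. Qed.
Definition pzero := Padic zero_proof.

Lemma one_proof : padic_pred p (fun n => (1 %% m n)%Z).
Proof. by move=> n; rewrite modz_modS. Qed.
Definition pone := Padic one_proof.

Lemma add_proof (x y : padic p) :
  padic_pred p (fun n => (pval x n + pval y n) %% m n)%Z.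
Proof.
move=> n; rewrite modz_modS (pvalP x n) (pvalP y n).
by rewrite modzDml modzDmr.
Qed.
Definition padd x y := Padic (add_proof x y).

Lemma opp_proof (x : padic p) :
  padic_pred p (fun n => (- pval x n) %% m n)%Z.
Proof. by move=> n; rewrite modz_modS (pvalP x n) modzNm. Qed.
Definition popp x := Padic (opp_proof x).

Lemma mul_proof (x y : padic p) :
  padic_pred p (fun n => (pval x n * pval y n) %% m n)%Z.
Proof.
move=> n; rewrite modz_modS (pvalP x n) (pvalP y n).
by rewrite modzMml modzMmr.
Qed.
Definition pmul x y := Padic (mul_proof x y).

Lemma paddA : associative padd.
Proof. by move=> x y z; apply: padic_eq => n /=; rewrite modzDml modzDmr addrA. Qed.
Lemma paddC : commutative padd.
Proof. by move=> x y; apply: padic_eq => n /=; rewrite addrC. Qed.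
Lemma padd0 : left_id pzero padd.
Proof. by move=> x; apply: padic_eq => n /=; rewrite add0r padic_red. Qed.
Lemma paddN : left_inverse pzero popp padd.
Proof. by move=> x; apply: padic_eq => n /=; rewrite modzDml addNr mod0z. Qed.

HB.instance Definition _ := GRing.isZmodule.Build (padic p) paddA paddC padd0 paddN.

Lemma pmulA : associative pmul.
Proof. by move=> x y z; apply: padic_eq => n /=; rewrite modzMml modzMmr mulrA. Qed.
Lemma pmulC : commutative pmul.
Proof. by move=> x y; apply: padic_eq => n /=; rewrite mulrC. Qed.
Lemma pmul1 : left_id pone pmul.
Proof. by move=> x; apply: padic_eq => n /=; rewrite modzMml mul1r padic_red. Qed.
Lemma pmulDl : left_distributive pmul padd.
Proof.
move=> x y z; apply: padic_eq => n /=.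
by rewrite modzMml mulrDl modzDml modzDmr.
Qed.
Lemma pone_neq0 : pone != pzero.
Proof.
apply/eqP => /(f_equal (fun x => pval x 1)) /=.
rewrite /padic_mod expn1 modz_small //.
by apply/andP; split => //; rewrite ltz_nat /padic_base leq_max orbT.
Qed.

HB.instance Definition _ :=
  GRing.Zmodule_isComNzRing.Build (padic p) pmulA pmulC pmul1 pmulDl pone_neq0.

End PadicRing.

Notation "''Z_[' p ']'" := (padic p).

Definition rdvd (R : comNzRingType) (a b : R) : Prop := exists c : R, b = a * c.

Definition reducible (R : comNzRingType) (g : {poly R}) : Prop :=
  exists a b : {poly R}, (1 < size a)%N /\ (1 < size b)%N /\ g = a * b.

(* Write g = X^4 + g3 X^3 + g2 X^2 + g1 X + g0 and look for a factorisation
   (X^2 + (h + u) X + b) (X^2 + (h - u) X + d) with h = g3 / 2.  Eliminating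
   b and d leaves the resolvent system
     u t = g1 - h e2 - h u^2,   t^2 = (e2 + u^2)^2 - 4 g0,   e2 = g2 - h^2.
   When g is close to f = (X^2 + A X + B) (X^2 - A X + C) with A = P a and
   B - C = P t0, the substitution u = P U, t = P T gives a system in (U, T)
   with the approximate solution (a, -t0) modulo p, at which the Jacobian is
   -2 (t0^2 + 2 (B + C) a^2) modulo p.  For the f of the theorem this is
   -2 (t0^2 + 4 zeta a^2), a unit because -zeta is not a square modulo p and
   p does not divide both a and t0.  A two-variable Hensel lemma then lifts
   the approximate solution to an exact one. *)
From HB Require Import structures.
From mathcomp Require Import all_boot all_order all_algebra ring.
Import GRing.Theory Num.Theory.
Set Implicit Arguments. Unset Strict Implicit. Unset Printing Implicit Defensive.
Local Open Scope ring_scope.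

Definition quartic (R : comNzRingType) (c0 c1 c2 c3 : R) : {poly R} :=
  'X^4 + c3%:P * 'X^3 + c2%:P * 'X^2 + c1%:P * 'X + c0%:P.

Section Quartic.
Variable R : comNzRingType.

Lemma quartic_coef (c0 c1 c2 c3 : R) :
  [/\ (quartic c0 c1 c2 c3)`_0 = c0, (quartic c0 c1 c2 c3)`_1 = c1,
      (quartic c0 c1 c2 c3)`_2 = c2 & (quartic c0 c1 c2 c3)`_3 = c3].
Proof.
by rewrite /quartic !coefD !coefCM !coefXn !coefX !coefC /=
  !(mulr0, mulr1, addr0, add0r).
Qed.

Lemma monic_quarticE (g : {poly R}) :
  g \is monic -> size g = 5%N -> g = quartic g`_0 g`_1 g`_2 g`_3.
Proof.
move=> g_monic g_size; apply/polyP => i.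
rewrite /quartic !coefD !coefCM !coefXn !coefX !coefC.
case: i => [|[|[|[|[|i]]]]] /=; rewrite ?mulr0 ?mulr1 ?addr0 ?add0r //.
  by have := monicP g_monic; rewrite lead_coefE g_size.
by rewrite nth_default // g_size.
Qed.

Lemma split_quarticE (A B C : R) :
  ('X^2 + A *: 'X + B%:P) * ('X^2 - A *: 'X + C%:P) =
  quartic (B * C) (A * (C - B)) (B + C - A * A) 0.
Proof. by rewrite /quartic -!mul_polyC !(polyCD, polyCN, polyCM) polyC0; ring. Qed.

Lemma size_monic_quadratic (c d : R) : size ('X^2 + c%:P * 'X + d%:P) = 3%N.
Proof.
rewrite expr2 -mulrDl size_MXaddC size_XaddC.
by case: eqP => // h; have := size_XaddC c; rewrite h size_poly0.
Qed.

Lemma quartic_reducible (i2 g0 g1 g2 g3 u t : R) : 2 * i2 = 1 ->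
  let h := i2 * g3 in let e2 := g2 - h * h in
  u * t = g1 - h * e2 - h * (u * u) -> t * t = (e2 + u * u) ^+ 2 - 4 * g0 ->
  reducible (quartic g0 g1 g2 g3).
Proof.
move=> i2_half h e2 ut tt; set s := e2 + u * u.
have twice x : x = 2 * i2 * x by rewrite i2_half mul1r.
have c3 : g3 = (h + u) + (h - u) by rewrite {1}(twice g3) /h; ring.
have c2 : g2 = i2 * (s - t) + i2 * (s + t) + (h + u) * (h - u).
  by transitivity (2 * i2 * s + h * h - u * u); [rewrite -twice /s /e2|]; ring.
have c1 : g1 = (h + u) * (i2 * (s + t)) + i2 * (s - t) * (h - u).
  by transitivity (2 * i2 * (h * s + u * t)); [rewrite -twice ut /s|]; ring.
have c0 : g0 = i2 * (s - t) * (i2 * (s + t)).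
  transitivity (2 * i2 * (2 * i2 * g0)); first by rewrite -!twice.
  by transitivity (i2 * i2 * (s * s - t * t)); [rewrite tt /s|]; ring.
exists ('X^2 + (h + u)%:P * 'X + (i2 * (s - t))%:P),
       ('X^2 + (h - u)%:P * 'X + (i2 * (s + t))%:P).
rewrite !size_monic_quadratic; split=> //; split=> //.
by rewrite /quartic c3 c2 c1 c0 !(polyCD, polyCN, polyCM); ring.
Qed.

End Quartic.

Section PadicIntegers.
Variable p : nat.
Hypothesis p_prime : prime p.
Local Notation R := 'Z_[p].
Local Notation m := (padic_mod p).
Local Notation pi := (p%:R : R).

Lemma padic_modE n : m n = (p ^ n)%:Z.
Proof. by rewrite /padic_mod /padic_base (maxn_idPl (prime_gt1 p_prime)). Qed.

Lemma padic_modD a b : m (a + b) = m a * m b.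
Proof. by rewrite /padic_mod expnD PoszM. Qed.

Lemma modz_modM (a d e : int) : modz (modz a (d * e)) d = modz a d.
Proof. by rewrite {2}(divz_eq a (d * e)) (mulrC d e) mulrA modzMDl. Qed.

Lemma pval_modz (z : R) n i : modz (pval z (n + i)) (m n) = pval z n.
Proof.
elim: i => [|i IH]; first by rewrite addn0 padic_red.
by rewrite addnS -IH (pvalP z (n + i)) padic_modD modz_modM.
Qed.

Lemma pvalB (x y : R) n : pval (x - y) n = modz (pval x n - pval y n) (m n).
Proof. by rewrite /= modzDmr. Qed.

Lemma pval_nat k n : pval (k%:R : R) n = modz k (m n).
Proof.
elim: k => [|k IH]; first by rewrite mod0z.
by rewrite mulrS /= IH modzDml modzDmr -addn1 PoszD addrC.
Qed.

Lemma pval_eq (x y : R) n : pval (x - y) n = 0 -> pval x n = pval y n.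
Proof.
rewrite pvalB => xy0.
by rewrite -padic_red -(padic_red y) -(subrK (pval y n) (pval x n)) -modzDml xy0 add0r.
Qed.

Definition pdvd n (x : R) := rdvd (pi ^+ n) x.

Lemma pdvdP n (z : R) : pdvd n z <-> pval z n = 0.
Proof.
have pval_pi j : pval (pi ^+ n) j = modz (p ^ n)%:Z (m j).
  by rewrite -natrX pval_nat.
split=> [[c ->]|z0].
  by rewrite /= pval_pi padic_modE modzz mul0r mod0z.
have m_dvd j : (m n %| pval z (n + j))%Z by apply/dvdz_mod0P; rewrite pval_modz.
pose c j := divz (pval z (n + j)) (m n).
have cK j : c j * m n = pval z (n + j) by rewrite /c divzK.
have cP : padic_pred p c.
  move=> j; apply: (mulIf (lt0r_neq0 (padic_mod_gt0 p n))).
  rewrite cK mulz_modl ?padic_mod_gt0 // cK -padic_modD (addnC j n) addnS.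
  exact: pvalP.
exists (Padic cP); apply: padic_eq => j.
by rewrite /= pval_pi modzMml -padic_modE mulrC cK addnC pval_modz.
Qed.

Lemma padic_eq0 (z : R) : (forall n, pdvd n z) -> z = 0.
Proof. by move=> zn; apply: padic_eq => n; apply/pdvdP. Qed.

Lemma padic_cauchy (xs : nat -> R) :
  (forall n, pdvd n (xs n.+1 - xs n)) -> exists l, forall n, pdvd n (l - xs n).
Proof.
move=> xsS.
have lP : padic_pred p (fun n => pval (xs n) n).
  move=> n /=; rewrite -(pvalP (xs n.+1) n).
  by symmetry; apply: pval_eq; apply/pdvdP.
by exists (Padic lP) => n; apply/pdvdP; rewrite pvalB /= subrr mod0z.
Qed.

Lemma pdvdn0 n : pdvd n 0.
Proof. by exists 0; rewrite mulr0. Qed.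

Lemma pdvdD n x y : pdvd n x -> pdvd n y -> pdvd n (x + y).
Proof. by case=> a -> [b ->]; exists (a + b); rewrite mulrDr. Qed.

Lemma pdvdN n x : pdvd n x -> pdvd n (- x).
Proof. by case=> a ->; exists (- a); rewrite mulrN. Qed.

Lemma pdvdB n x y : pdvd n x -> pdvd n y -> pdvd n (x - y).
Proof. by move=> px py; apply: pdvdD => //; apply: pdvdN. Qed.

Lemma pdvdMr n x y : pdvd n x -> pdvd n (x * y).
Proof. by case=> a ->; exists (a * y); rewrite mulrA. Qed.

Lemma pdvdMl n x y : pdvd n y -> pdvd n (x * y).
Proof. by rewrite mulrC; apply: pdvdMr. Qed.

Lemma pdvdM a b x y : pdvd a x -> pdvd b y -> pdvd (a + b) (x * y).
Proof. by case=> u -> [w ->]; exists (u * w); rewrite exprD; ring. Qed.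

Lemma pdvd_leq a b x : (a <= b)%N -> pdvd b x -> pdvd a x.
Proof.
by move=> le_ab [c ->]; exists (pi ^+ (b - a) * c); rewrite mulrA -exprD subnKC.
Qed.

Lemma pdvd1_pi x : pdvd 1 (pi * x).
Proof. by exists x; rewrite expr1. Qed.

Lemma pval1E (x : R) : pval x 1 = (`|pval x 1| %% p)%N.
Proof.
have m1 : m 1 = p by rewrite padic_modE expn1.
have x_ge0 : 0 <= pval x 1.
  by rewrite -padic_red modz_ge0 // m1 lt0r_neq0 // ltz_nat prime_gt0.
by rewrite -modz_nat gez0_abs // -m1 padic_red.
Qed.

Lemma pdvd1P (x : R) : pdvd 1 x <-> (p %| `|pval x 1|)%N.
Proof. by rewrite pdvdP {1}pval1E /dvdn; split=> [[->]|/eqP ->]. Qed.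

Lemma pdvd1M (x y : R) : pdvd 1 (x * y) -> pdvd 1 x \/ pdvd 1 y.
Proof.
rewrite !pdvd1P /= {1}(pval1E x) {1}(pval1E y) padic_modE expn1 -PoszM modz_nat /=.
rewrite {1}/dvdn modn_mod modnMml modnMmr -/(dvdn _ _) Euclid_dvdM //.
by case/orP; [left|right].
Qed.

Lemma pdvd1_approx_inv x : ~ pdvd 1 x -> exists v, pdvd 1 (1 - x * v).
Proof.
move=> x_unit; set a := `|pval x 1|%N.
have cop : coprime p a by rewrite prime_coprime //; apply/negP => /pdvd1P.
have [u _ au] := Bezoutl a (prime_gt0 p_prime); rewrite (eqP cop) in au.
exists (- u%:R); rewrite mulrN opprK; apply/pdvdP.
rewrite /= pval_nat modzMmr modzDml modzDmr (pval1E x) padic_modE expn1 -/a.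
rewrite -PoszM -PoszD modz_nat; apply/eqP; rewrite eqz_nat -/(dvdn _ _).
by rewrite /dvdn -modnDmr modnMml modnDmr mulnC.
Qed.

(* Instead of bivariate polynomials, the Hensel lemma below works with any maps
   having an exact Taylor expansion; Fx and Fy play the role of the partial
   derivatives of F. *)
Definition taylor1 (j : R -> R -> R) := forall x y a b, exists s1 s2,
  j (x + a) (y + b) - j x y = a * s1 + b * s2.

Definition taylor2 (F Fx Fy : R -> R -> R) := forall x y a b, exists r1 r2 r3,
  F (x + a) (y + b) - F x y - (Fx x y * a + Fy x y * b) =
  a * a * r1 + a * b * r2 + b * b * r3.

Lemma taylor1_pdvd j n x y x' y' : taylor1 j ->
  pdvd n (x' - x) -> pdvd n (y' - y) -> pdvd n (j x' y' - j x y).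
Proof.
move=> /(_ x y (x' - x) (y' - y)) [s1 [s2]].
by rewrite !(addrC x) !(addrC y) !subrK => -> dx dy; apply: pdvdD; apply: pdvdMr.
Qed.

Lemma taylor2_pdvd F Fx Fy n x y x' y' : taylor2 F Fx Fy ->
  pdvd n (x' - x) -> pdvd n (y' - y) -> pdvd n (F x' y' - F x y).
Proof.
move=> /(_ x y (x' - x) (y' - y)) [r1 [r2 [r3]]].
rewrite !(addrC x) !(addrC y) !subrK => /eqP; rewrite subr_eq => /eqP -> dx dy.
by apply: pdvdD; [do !apply: pdvdD; do 2 apply: pdvdMr | apply: pdvdD; apply: pdvdMl].
Qed.

(* One step of Newton's method with the Jacobian frozen at (x0, y0); w is the
   Jacobian determinant there times its inverse modulo p. *)
Lemma newton_step F Fx Fy x0 y0 x y a b w n :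
  taylor2 F Fx Fy -> taylor1 Fx -> taylor1 Fy ->
  pdvd 1 (x - x0) -> pdvd 1 (y - y0) -> pdvd 1 (1 - w) ->
  pdvd n.+1 a -> pdvd n.+1 b -> pdvd n.+1 (F x y) ->
  Fx x0 y0 * a + Fy x0 y0 * b = - (w * F x y) ->
  pdvd n.+2 (F (x + a) (y + b)).
Proof.
move=> F_taylor Fx_taylor Fy_taylor dx dy dw da db dF lin.
have [r1 [r2 [r3 rem]]] := F_taylor x y a b.
have -> : F (x + a) (y + b) =
    a * a * r1 + a * b * r2 + b * b * r3 + ((1 - w) * F x y
    + (Fx x y - Fx x0 y0) * a + (Fy x y - Fy x0 y0) * b).
  rewrite -rem; apply/eqP; rewrite -subr_eq0; apply/eqP.
  by transitivity (w * F x y + (Fx x0 y0 * a + Fy x0 y0 * b));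
    [ring | rewrite lin subrr].
have dxx := taylor1_pdvd Fx_taylor dx dy; have dyy := taylor1_pdvd Fy_taylor dx dy.
have leq2 : (n.+2 <= n.+1 + n.+1)%N by rewrite addSn ltnS leq_addl.
do !apply: pdvdD; do ?[apply: pdvd_leq leq2 _; apply: pdvdMr; exact: pdvdM];
  by rewrite -add1n; apply: pdvdM.
Qed.

Lemma hensel2 F1 F2 F1x F1y F2x F2y x0 y0 :
  taylor2 F1 F1x F1y -> taylor2 F2 F2x F2y ->
  taylor1 F1x -> taylor1 F1y -> taylor1 F2x -> taylor1 F2y ->
  ~ pdvd 1 (F1x x0 y0 * F2y x0 y0 - F1y x0 y0 * F2x x0 y0) ->
  pdvd 1 (F1 x0 y0) -> pdvd 1 (F2 x0 y0) ->
  exists x y, F1 x y = 0 /\ F2 x y = 0.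
Proof.
move=> F1T F2T F1xT F1yT F2xT F2yT jac F10 F20.
have [v dv] := pdvd1_approx_inv jac.
set det := _ - _ in dv.
pose da x y := - v * (F2y x0 y0 * F1 x y - F1y x0 y0 * F2 x y).
pose db x y := - v * (F1x x0 y0 * F2 x y - F2x x0 y0 * F1 x y).
pose z n := iter n (fun z : R * R => (z.1 + da z.1 z.2, z.2 + db z.1 z.2)) (x0, y0).
have zS n : z n.+1 = ((z n).1 + da (z n).1 (z n).2, (z n).2 + db (z n).1 (z n).2).
  by [].
have dab n x y : pdvd n (F1 x y) -> pdvd n (F2 x y) ->
    pdvd n (da x y) /\ pdvd n (db x y).
  by move=> d1 d2; split; apply: pdvdMl; apply: pdvdB; apply: pdvdMl.
have zP n : [/\ pdvd 1 ((z n).1 - x0), pdvd 1 ((z n).2 - y0),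
    pdvd n.+1 (F1 (z n).1 (z n).2) & pdvd n.+1 (F2 (z n).1 (z n).2)].
  elim: n => [|n [dx dy d1 d2]]; first by rewrite /= !subrr; split=> //; exact: pdvdn0.
  have [da' db'] := dab _ _ _ d1 d2.
  rewrite zS /=; split.
  - by rewrite addrAC; apply: pdvdD => //; apply: pdvd_leq da'.
  - by rewrite addrAC; apply: pdvdD => //; apply: pdvd_leq db'.
  - apply: newton_step F1T F1xT F1yT dx dy dv da' db' d1 _.
    by rewrite /da /db /det; ring.
  - apply: newton_step F2T F2xT F2yT dx dy dv da' db' d2 _.
    by rewrite /da /db /det; ring.
have [lx dlx] : exists l, forall n, pdvd n (l - (z n).1).
  apply: padic_cauchy => n; rewrite zS /= (addrC (z n).1) addrK.
  by case: (zP n) => _ _ d1 d2; case: (dab _ _ _ d1 d2) => + _; apply: pdvd_leq.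
have [ly dly] : exists l, forall n, pdvd n (l - (z n).2).
  apply: padic_cauchy => n; rewrite zS /= (addrC (z n).2) addrK.
  by case: (zP n) => _ _ d1 d2; case: (dab _ _ _ d1 d2) => _; apply: pdvd_leq.
exists lx, ly; split; apply: padic_eq0 => n; case: (zP n) => _ _ d1 d2.
- rewrite -(subrK (F1 (z n).1 (z n).2) (F1 lx ly)).
  by apply: pdvdD; [exact: taylor2_pdvd F1T (dlx n) (dly n) | exact: pdvd_leq d1].
- rewrite -(subrK (F2 (z n).1 (z n).2) (F2 lx ly)).
  by apply: pdvdD; [exact: taylor2_pdvd F2T (dlx n) (dly n) | exact: pdvd_leq d2].
Qed.

Lemma padic_unit x : ~ pdvd 1 x -> exists y, x * y = 1.
Proof.
move=> x_unit; have [v xv] := pdvd1_approx_inv x_unit.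
have [] := @hensel2 (fun y _ => x * y - 1) (fun _ w => w) (fun _ _ => x)
  (fun _ _ => 0) (fun _ _ => 0) (fun _ _ => 1) v 0.
1-6: by move=> y w a b; do ?exists 0; ring.
- by rewrite mulr1 mul0r subr0.
- by rewrite -opprB; apply: pdvdN.
- exact: pdvdn0.
by move=> y [w [/eqP]]; rewrite subr_eq0 => /eqP; exists y.
Qed.

Lemma pdvd1_dec x : pdvd 1 x \/ ~ pdvd 1 x.
Proof.
by have := pdvd1P x; case: (p %| _)%N => xP; [left; apply/xP | right => /xP].
Qed.

Hypothesis p_gt2 : (2 < p)%N.

Lemma pdvd1_2 : ~ pdvd 1 (2 : R).
Proof.
rewrite pdvd1P pval_nat padic_modE expn1 modz_nat /= modn_small //.
by move=> /(dvdn_leq (isT : (0 < 2)%N)); rewrite leqNgt p_gt2.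
Qed.

Lemma pdvd1_mul2 x : pdvd 1 (2 * x) -> pdvd 1 x.
Proof. by case/pdvd1M => // /pdvd1_2. Qed.

Lemma nonsquare_form_pdvd1 zeta a t : ~ (exists y, pdvd 1 (y ^+ 2 + zeta)) ->
  pdvd 1 (t * t + 4 * zeta * (a * a)) -> pdvd 1 a /\ pdvd 1 t.
Proof.
move=> nonsq; set N := _ + _ => dN.
have da : pdvd 1 a.
  case: (pdvd1_dec a) => // a_unit; exfalso.
  have [w aw] : exists w, 2 * a * w = 1.
    by apply: padic_unit => /pdvd1M [/pdvd1_2|].
  apply: nonsq; exists (t * w).
  have -> : (t * w) ^+ 2 + zeta =
      w * w * N - zeta * (2 * a * w - 1) * (2 * a * w + 1) by rewrite /N; ring.
  by rewrite aw subrr mulr0 mul0r subr0; apply: pdvdMl.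
have dtt : pdvd 1 (t * t).
  rewrite -(addrK (4 * zeta * (a * a)) (t * t)).
  by apply: pdvdB => //; apply: pdvdMl; apply: pdvdMl.
by split=> //; case/pdvd1M: dtt.
Qed.

(* The root is sought as u = P U, t = P T; the hypotheses say that (U0, T0)
   is a nondegenerate root modulo p of the system for (U, T). *)
Lemma resolvent_root (g0 g1 h e2 P E1 D U0 T0 : R) :
  g1 - h * e2 = P * P * E1 -> e2 ^+ 2 - 4 * g0 = P * P * D ->
  pdvd 1 (U0 * T0 + h * (U0 * U0) - E1) ->
  pdvd 1 (D + 2 * e2 * (U0 * U0) + P * P * (U0 * U0) ^+ 2 - T0 * T0) ->
  ~ pdvd 1 ((T0 + 2 * h * U0) * (- 2 * T0)
            - U0 * (4 * e2 * U0 + 4 * P * P * U0 ^+ 3)) ->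
  exists u t, u * t = g1 - h * e2 - h * (u * u) /\ t * t = (e2 + u * u) ^+ 2 - 4 * g0.
Proof.
move=> E1E DE d1 d2 jac.
have [] := @hensel2 (fun U T => U * T + h * (U * U) - E1)
  (fun U T => D + 2 * e2 * (U * U) + P * P * (U * U) ^+ 2 - T * T)
  (fun U T => T + 2 * h * U) (fun U _ => U)
  (fun U _ => 4 * e2 * U + 4 * P * P * U ^+ 3) (fun _ T => - 2 * T) U0 T0.
- by move=> U T a b; exists h, 1, 0; ring.
- move=> U T a b; exists (2 * e2 + P * P * (6 * U * U + 4 * U * a + a * a)), 0, (-1).
  by ring.
- by move=> U T a b; exists (2 * h), 1; ring.
- by move=> U T a b; exists 1, 0; ring.
- move=> U T a b; exists (4 * e2 + 4 * P * P * (3 * U * U + 3 * U * a + a * a)), 0.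
  by ring.
- by move=> U T a b; exists 0, (-2); ring.
- exact: jac.
- exact: d1.
- exact: d2.
move=> U [T [/eqP]]; rewrite subr_eq0 => /eqP G1 /eqP; rewrite subr_eq0 => /eqP G2.
exists (P * U), (P * T); split; first by rewrite E1E -G1; ring.
by transitivity (P * P * (T * T)); [ring | rewrite -G2 -addrA mulrDr -DE; ring].
Qed.

Lemma reducible_near_split_quartic_coef (P a t A B C c0 c1 c2 c3 : R) :
  A = P * a -> B = C + P * t -> ~ pdvd 1 (t * t + 2 * (B + C) * (a * a)) ->
  let Q := P * P * pi in
  reducible (quartic (Q * c0 + B * C) (Q * c1 + A * (C - B))
                     (Q * c2 + (B + C - A * A)) (Q * c3)).
Proof.
move=> AE BE jac Q.
have [i2 i2_half] := padic_unit pdvd1_2.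
pose h := i2 * (Q * c3); pose e2 := Q * c2 + (B + C - A * A) - h * h.
pose r := c2 - i2 * i2 * Q * c3 * c3.
pose E1 := - (a * t) + pi * (c1 - i2 * c3 * e2).
pose D := t * t - 2 * (B + C) * (a * a) + P * P * (a * a) ^+ 2
          + pi * (2 * (B + C - A * A) * r + Q * r * r - 4 * c0).
have [u [t' [ut tt]]] : exists u t,
    u * t = Q * c1 + A * (C - B) - h * e2 - h * (u * u) /\
    t * t = (e2 + u * u) ^+ 2 - 4 * (Q * c0 + B * C).
  apply: (resolvent_root (E1 := E1) (D := D) (P := P) (U0 := a) (T0 := - t)).
  - by rewrite /E1 /e2 /h /Q AE BE; ring.
  - by rewrite /D /r /e2 /h /Q AE BE; ring.
  - have -> : a * - t + h * (a * a) - E1 =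
        pi * (i2 * P * P * c3 * (a * a) - c1 + i2 * c3 * e2).
      by rewrite /E1 /h /Q; ring.
    exact: pdvd1_pi.
  - have -> : D + 2 * e2 * (a * a) + P * P * (a * a) ^+ 2 - - t * - t =
        pi * (2 * P * P * r * (a * a)
              + (2 * (B + C - A * A) * r + Q * r * r - 4 * c0)).
      by rewrite /D /r /e2 /h /Q AE; ring.
    exact: pdvd1_pi.
  - move=> dJ; apply: jac; rewrite -[_ + _]opprK; apply: pdvdN; apply: pdvd1_mul2.
    have -> : 2 * - (t * t + 2 * (B + C) * (a * a)) =
        (- t + 2 * h * a) * (- 2 * - t) - a * (4 * e2 * a + 4 * P * P * a ^+ 3)
        - pi * (4 * i2 * P * P * c3 * a * t - 4 * P * P * r * (a * a)).
      by rewrite /r /e2 /h /Q AE; ring.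
    by apply: pdvdB => //; apply: pdvd1_pi.
exact: quartic_reducible i2_half ut tt.
Qed.

Lemma reducible_near_split_quartic (P a t A B C : R) (g : {poly R}) :
  A = P * a -> B - C = P * t -> ~ pdvd 1 (t * t + 2 * (B + C) * (a * a)) ->
  g \is monic -> size g = 5%N ->
  (forall i, rdvd (P * P * pi)
     (g`_i - (('X^2 + A *: 'X + B%:P) * ('X^2 - A *: 'X + C%:P))`_i)) ->
  reducible g.
Proof.
move=> AE BCE jac g_monic g_size near.
have [f0 f1 f2 f3] := quartic_coef (B * C) (A * (C - B)) (B + C - A * A) 0.
rewrite split_quarticE in near.
have [c0] := near 0%N; rewrite f0 => /eqP; rewrite subr_eq => /eqP g0E.
have [c1] := near 1%N; rewrite f1 => /eqP; rewrite subr_eq => /eqP g1E.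
have [c2] := near 2%N; rewrite f2 => /eqP; rewrite subr_eq => /eqP g2E.
have [c3] := near 3%N; rewrite f3 subr0 => g3E.
rewrite (monic_quarticE g_monic g_size) g0E g1E g2E g3E.
by apply: reducible_near_split_quartic_coef jac => //; rewrite -BCE addrC subrK.
Qed.

End PadicIntegers.

Theorem claim1 (p : nat) (p_prime : prime p) (p_odd : odd p)
  (zeta alpha beta gamma : 'Z_[p]) (k : nat) :
  ~ (exists y : 'Z_[p], rdvd (p%:R) (y ^+ 2 + zeta)) ->
  rdvd ((p%:R : 'Z_[p]) ^+ k) alpha ->
  rdvd ((p%:R : 'Z_[p]) ^+ k) (beta - gamma) ->
  (~ rdvd ((p%:R : 'Z_[p]) ^+ k.+1) alpha \/
   ~ rdvd ((p%:R : 'Z_[p]) ^+ k.+1) (beta - gamma)) ->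
  let f : {poly 'Z_[p]} :=
    ('X^2 + (p%:R * alpha) *: 'X + (p%:R * beta + zeta)%:P) *
    ('X^2 - (p%:R * alpha) *: 'X + (p%:R * gamma + zeta)%:P) in
  forall g : {poly 'Z_[p]},
    g \is monic -> size g = 5%N ->
    (forall i : nat, rdvd ((p%:R : 'Z_[p]) ^+ (2 * k + 3)) (g`_i - f`_i)) ->
    reducible g.
Proof.
move=> nonsq [a alphaE] [t diffE] not_both f g g_monic g_size near.
have p_gt2 : (2 < p)%N.
  by rewrite ltn_neqAle prime_gt1 // andbT; apply: contraTneq p_odd => <-.
set pi := (p%:R : 'Z_[p]) in nonsq alphaE diffE not_both f near *.
have not_both_pdvd1 : ~ (pdvd 1 a /\ pdvd 1 t).
  case=> [[c aE] [c' tE]]; case: not_both; apply.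
  - by exists c; rewrite alphaE aE expr1 exprSr mulrA.
  - by exists c'; rewrite diffE tE expr1 exprSr mulrA.
apply: (reducible_near_split_quartic p_prime p_gt2 (P := pi ^+ k.+1) (a := a) (t := t)
  (A := pi * alpha) (B := pi * beta + zeta) (C := pi * gamma + zeta)
  _ _ _ g_monic g_size).
- by rewrite alphaE exprS mulrA.
- by rewrite exprS -mulrA -diffE; ring.
- move=> dJ; apply/not_both_pdvd1/(nonsquare_form_pdvd1 p_prime p_gt2 (zeta := zeta)).
    by case=> y; rewrite /pdvd expr1 => ?; apply: nonsq; exists y.
  have -> : t * t + 4 * zeta * (a * a) =
      t * t + 2 * (pi * beta + zeta + (pi * gamma + zeta)) * (a * a)
      - pi * (2 * (beta + gamma) * (a * a)) by ring.
  by apply: pdvdB => //; apply: pdvd1_pi.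
- have -> : pi ^+ k.+1 * pi ^+ k.+1 * pi = pi ^+ (2 * k + 3).
    by rewrite -exprD -exprSr mul2n -addnn addn3 addSn addnS.
  exact: near.
Qed.
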